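(* Let $\lambda>0$. In a deterministic interest-rate model (as described in the context), if the long tail-Pareto rate $L^{(\lambda)}_{0\infty}$ of index $\lambda$ is finite, then for all $t\ge0$ the long tail-Pareto rate $L^{(\lambda)}_{t\infty}$ is finite and is given by $L^{(\lambda)}_{t\infty}=P_{0t}^{1/\lambda}L^{(\lambda)}_{0\infty}$.
   Context: A deterministic interest-rate model is given by a deterministic initial discount function $T\mapsto P_{0T}>0$ ($T\ge0$, $P_{00}=1$), with discount bond prices at later times determined by absence of arbitrage as $P_{tT}=P_{0T}/P_{0t}$ for $0\le t<T$. For $\lambda>0$, the tail-Pareto rate $L^{(\lambda)}_{tT}$ is defined by $P_{tT}=\left[1+\lambda^{-1}(T-t)L^{(\lambda)}_{tT}\right]^{-\lambda}$, and the long tail-Pareto rate is $L^{(\lambda)}_{t\infty}=\limsup_{T\to\infty}L^{(\lambda)}_{tT}$. *)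

From mathcomp Require Import all_boot all_order all_algebra.
From mathcomp Require Import all_classical all_reals all_analysis.
Set Implicit Arguments. Unset Strict Implicit. Unset Printing Implicit Defensive.
Import Order.TTheory GRing.Theory Num.Theory numFieldTopology.Exports.
Local Open Scope ring_scope.
Local Open Scope classical_set_scope.

Definition bond_price (R : realType) (P0 : R -> R) (t T : R) : R := P0 T / P0 t.

(* Tail-Pareto rate L^(lam)_{tT}: the unique solution L of
   P_{tT} = (1 + lam^-1 (T - t) L)^(-lam), i.e.
   L = lam / (T - t) * (P_{tT}^(-1/lam) - 1)   (for t < T). *)
Definition tail_pareto_rate (R : realType) (lam : R) (P0 : R -> R) (t T : R) : R :=
  lam / (T - t) * ((bond_price P0 t T) `^ (- lam^-1) - 1).

Definition long_tail_pareto_rate (R : realType) (lam : R) (P0 : R -> R) (t : R)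
  : \bar R :=
  limf_esup (fun T : R => (tail_pareto_rate lam P0 t T)%:E) (pinfty_nbhs R).

From mathcomp Require Import all_boot all_order all_algebra.
From mathcomp Require Import all_classical all_reals all_analysis.
Import Order.TTheory GRing.Theory Num.Theory numFieldTopology.Exports.
Local Open Scope ring_scope.
Local Open Scope classical_set_scope.
From mathcomp Require Import lra ring.

(* With c := P_{0t}^{1/lam}, the rate seen from time t is an affine image of
   the rate seen from time 0,
     L_{tT} = c T / (T - t) * L_{0T} + lam (c - 1) / (T - t),
   whose slope tends to c > 0 and whose intercept tends to 0 as T -> oo; such
   a transformation multiplies a finite limsup by c. *)

Section limsup_pinfty.
Context {R : realType}.
Implicit Types (f g a b : R -> R) (c l : R).

Lemma limf_esup_pinftyP f l :
  limf_esup (fun x => (f x)%:E) (pinfty_nbhs R) = l%:E <->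
  (forall e, 0 < e -> \forall x \near +oo, f x <= l + e) /\
  (forall e, 0 < e -> forall M, exists2 x, M < x & l - e <= f x).
Proof.
rewrite limf_esupE; split=> [fl|[fub flb]].
  split=> [e e0|e e0 M].
  - have : (ereal_inf [set ereal_sup ((fun x => (f x)%:E) @` V) | V in pinfty_nbhs R]
        < (l + e)%:E)%E by rewrite fl lte_fin ltrDl.
    move=> /ereal_inf_lt[_ [V [M [_ MV]] <-]] supV.
    exists M; split; first exact: num_real.
    move=> x Mx; rewrite -lee_fin; apply/ltW/(le_lt_trans _ supV).
    by apply: ereal_sup_ubound; exists x => //; exact: MV.
  - have : ((l - e)%:E < ereal_sup ((fun x => (f x)%:E) @` [set x | (M < x)%R]))%E.
      apply: (@lt_le_trans _ _ l%:E); first by rewrite lte_fin gtrDl oppr_lt0.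
      rewrite -fl; apply: ereal_inf_lbound.
      by exists [set x | (M < x)%R] => //; exists M; split => //; exact: num_real.
    by move=> /ereal_sup_gt[_ [x /= Mx <-]]; rewrite lte_fin => /ltW; exists x.
apply/le_anti/andP; split.
  apply/lee_addgt0Pr => e e0; have [M [_ fM]] := fub e e0.
  apply: ge_ereal_inf; exists (ereal_sup ((fun x => (f x)%:E) @` [set x | (M < x)%R])).
    by exists [set x | (M < x)%R] => //; exists M; split => //; exact: num_real.
  by apply: ge_ereal_sup => _ [x /= Mx <-]; rewrite -EFinD lee_fin; exact: fM.
apply: le_ereal_inf_tmp => _ [V [M [_ MV]] <-].
apply/lee_subgt0Pr => e e0; have [x Mx fx] := flb e e0 M.
apply: le_trans (ereal_sup_ubound _); last by exists x => //; exact: MV.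
by rewrite -EFinB lee_fin.
Qed.

Lemma limf_esup_pinfty_affine f g a b c l :
  0 < c -> a x @[x --> +oo] --> c -> b x @[x --> +oo] --> 0 ->
  (\forall x \near +oo, g x = a x * f x + b x) ->
  limf_esup (fun x => (f x)%:E) (pinfty_nbhs R) = l%:E ->
  limf_esup (fun x => (g x)%:E) (pinfty_nbhs R) = (c * l)%:E.
Proof.
move=> c0 ac b0 gE /limf_esup_pinftyP[fub flb]; apply/limf_esup_pinftyP.
have affine_cvg k : a x * k + b x @[x --> +oo] --> c * k.
  by rewrite -[c * k]addr0; apply: cvgD => //; exact: cvgMr_tmp.
have a_gt0 : \forall x \near +oo, 0 < a x by exact: cvgr_gt ac _ c0.
split=> [e e0|e e0 M]; pose d := e / 2 / c.
- have d0 : 0 < d by rewrite !divr_gt0.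
  have cd : c * d = e / 2 by rewrite mulrCA divff ?gt_eqF ?mulr1.
  have affine_lt : \forall x \near +oo, a x * (l + d) + b x < c * (l + d) + e / 2.
    by apply: (cvgr_lt _ (affine_cvg _)); rewrite ltrDl divr_gt0.
  near=> x; have -> : g x = a x * f x + b x by near: x.
  apply: (@le_trans _ _ (a x * (l + d) + b x)).
    rewrite lerD2r ler_wpM2l //; last by near: x; exact: fub.
    by apply: ltW; near: x.
  apply: ltW; apply: (@lt_le_trans _ _ (c * (l + d) + e / 2)); first by near: x.
  by rewrite mulrDr cd; lra.
- have d0 : 0 < d by rewrite !divr_gt0.
  have cd : c * d = e / 2 by rewrite mulrCA divff ?gt_eqF ?mulr1.
  have affine_gt : \forall x \near +oo, c * (l - d) - e / 2 < a x * (l - d) + b x.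
    by apply: (cvgr_gt _ (affine_cvg _)); rewrite gtrDl oppr_lt0 divr_gt0.
  have [M1 [_ M1P]] : \forall x \near +oo,
      [/\ g x = a x * f x + b x, 0 < a x & c * (l - d) - e / 2 < a x * (l - d) + b x].
    by near=> x; split; near: x.
  have [x Mx fx] := flb _ d0 (Num.max M M1).
  move: Mx; rewrite gt_max => /andP[Mx M1x]; exists x => //.
  have [-> ax affx] := M1P x M1x.
  apply: (@le_trans _ _ (a x * (l - d) + b x)).
    by apply/ltW/(le_lt_trans _ affx); rewrite mulrBr cd; lra.
  by rewrite lerD2r ler_wpM2l // ltW.
Unshelve. all: by end_near.
Qed.
End limsup_pinfty.

Lemma cvg_div_subr_pinfty {R : realType} (k t : R) : k / (x - t) @[x --> +oo] --> 0.
Proof.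
have x_gt : forall A, \forall x \near +oo, A < x - t.
  by move=> A; near=> x; rewrite ltrBrDr; near: x; apply: nbhs_pinfty_gt; exact: num_real.
have inv0 : (x - t)^-1 @[x --> +oo] --> 0.
  by apply/(gtr0_cvgV0 (f := fun x => x - t)); [exact: x_gt | exact/cvgryPgt].
by rewrite -(mulr0 k); exact: cvgMl_tmp.
Unshelve. all: by end_near.
Qed.

Lemma tail_pareto_rate_shift {R : realType} (lam : R) (P0 : R -> R) (t T : R) :
  P0 0 = 1 -> 0 <= P0 t -> 0 <= P0 T -> 0 <= t -> t < T ->
  tail_pareto_rate lam P0 t T =
    P0 t `^ lam^-1 * (1 + t / (T - t)) * tail_pareto_rate lam P0 0 T
    + lam * (P0 t `^ lam^-1 - 1) / (T - t).
Proof.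
move=> P00 Pt PT t0 tT.
rewrite /tail_pareto_rate /bond_price P00 divr1 subr0 powRM ?invr_ge0 //.
have -> : (P0 t)^-1 `^ (- lam^-1) = P0 t `^ lam^-1.
  by rewrite -powR_inv1 // -powRrM mulrN mulNr opprK mul1r.
have T0 : T != 0 by rewrite gt_eqF // (le_lt_trans t0).
have Tt : T - t != 0 by rewrite subr_eq0 gt_eqF.
by field; rewrite T0 Tt.
Qed.

Theorem proposition8 (R : realType) (lam : R) (P0 : R -> R) :
  0 < lam ->
  P0 0 = 1 ->
  (forall T : R, 0 <= T -> 0 < P0 T) ->
  long_tail_pareto_rate lam P0 0 \is a fin_num ->
  forall t : R, 0 <= t ->
    long_tail_pareto_rate lam P0 t \is a fin_num /\
    long_tail_pareto_rate lam P0 t =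
      ((P0 t `^ (lam^-1))%:E * long_tail_pareto_rate lam P0 0)%E.
Proof.
(* The identity relating the two rates holds whatever the sign of lam. *)
move=> _ P00 P0_gt0 fin0 t t0.
have c0 : 0 < P0 t `^ lam^-1 by rewrite powR_gt0 // P0_gt0.
have L0E : long_tail_pareto_rate lam P0 0 = (fine (long_tail_pareto_rate lam P0 0))%:E.
  by rewrite fineK.
suff -> : long_tail_pareto_rate lam P0 t
    = (P0 t `^ lam^-1 * fine (long_tail_pareto_rate lam P0 0))%:E.
  by rewrite L0E EFinM.
apply: (limf_esup_pinfty_affine _ _ (fun T => P0 t `^ lam^-1 * (1 + t / (T - t)))
  _ _ _ c0 _ (cvg_div_subr_pinfty (lam * (P0 t `^ lam^-1 - 1)) t) _ L0E).
- rewrite -[X in _ --> X]mulr1; apply: cvgMl_tmp.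
  rewrite -[X in _ --> X]addr0; apply: cvgD; [exact: cvg_cst | exact: cvg_div_subr_pinfty].
- near=> T.
  have tT : t < T by near: T; apply: nbhs_pinfty_gt; exact: num_real.
  have T0 : 0 <= T := ltW (le_lt_trans t0 tT).
  exact: tail_pareto_rate_shift lam _ _ _ P00 (ltW (P0_gt0 _ t0)) (ltW (P0_gt0 _ T0)) t0 tT.
Unshelve. all: by end_near.
Qed.
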